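(* Let $s\ge 1$, $q=4^{2s}$, and let $\theta$ be the automorphism of $F_q$ given by $\theta(a)=a^{4^s}$. Let $n$ be odd and suppose $x^n-1=h(x)g(x)$ in $F_q[x;\theta]$. Then the skew cyclic code $C=\langle g(x)\rangle$ of length $n$ over $F_q$ is a reversible DNA code if and only if $g(x)$ is a palindromic polynomial.
   Context: $F_q[x;\theta]$ is the skew polynomial ring: polynomials $\sum a_ix^i$ with $a_i\in F_q$, usual addition, and multiplication determined by $xa=\theta(a)x$ for $a\in F_q$. A skew cyclic code of length $n$ is a linear code $C\subseteq F_q^n$ such that $(\theta(c_{n-1}),\theta(c_0),\ldots,\theta(c_{n-2}))\in C$ whenever $(c_0,\ldots,c_{n-1})\in C$; identifying $(c_0,\ldots,c_{n-1})$ with $c_0+c_1x+\dots+c_{n-1}x^{n-1}$, such codes are left $F_q[x;\theta]$-submodules of $F_q[x;\theta]/(x^n-1)$, and $\langle g(x)\rangle$ denotes the left submodule generated by $g(x)$. A polynomial $f(x)=a_0+\dots+a_tx^t$ of degree $t$ is palindromic if $a_i=a_{t-i}$ for all $i$. DNA correspondence: there is a fixed bijection $\tau:F_{4^{2s}}\to\{A,T,G,C\}^{2s}$ such that for every $\beta$, $\tau(\beta^{4^s})$ is the reverse of the string $\tau(\beta)$; it extends to $\phi:F_q^n\to\{A,T,G,C\}^{2sn}$ by concatenation. A code $C\subseteq F_q^n$ is a reversible DNA code if the reverse string $\phi(c)^r$ lies in $\phi(C)$ for all $c\in C$; equivalently, $(\theta(c_{n-1}),\ldots,\theta(c_1),\theta(c_0))\in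 C$ for every $(c_0,\ldots,c_{n-1})\in C$. *)

From HB Require Import structures.
From mathcomp Require Import all_boot all_order all_algebra all_field.
Set Implicit Arguments. Unset Strict Implicit. Unset Printing Implicit Defensive.
Import GRing.Theory.
Local Open Scope ring_scope.

Definition frob {F : finFieldType} (s : nat) (a : F) : F := a ^+ (4 ^ s).

(* Skew polynomial ring F[x; theta]: elements are represented by their
   coefficient sequences (the carrier {poly F}, addition as usual), and the
   multiplication is determined by x a = theta(a) x, i.e.
   (sum a_i x^i)(sum b_j x^j) = sum a_i theta^i(b_j) x^(i+j). *)
Definition skew_mul (F : fieldType) (theta : F -> F) (f g : {poly F}) : {poly F} :=
  \sum_(i < size f) \sum_(j < size g) (f`_i * iter i theta g`_j) *: 'X^(i + j).

Definition word_poly (F : fieldType) (n : nat) (c : 'rV[F]_n) : {poly F} :=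
  \sum_(i < n) c 0 i *: 'X^i.

(* The left F[x;theta]-submodule <g> of F[x;theta]/(x^n - 1) (quotient by the
   left ideal generated by x^n - 1), viewed as a set of words of length n:
   c is in the code iff its class equals the class of f * g for some f. *)
Definition skew_code (F : fieldType) (theta : F -> F) (n : nat) (g : {poly F})
  (c : 'rV[F]_n) : Prop :=
  exists f q : {poly F},
    word_poly c = skew_mul theta f g + skew_mul theta q ('X^n - 1).

(* Reversible DNA code (theta-form): (c_0,...,c_{n-1}) in C implies
   (theta c_{n-1}, ..., theta c_1, theta c_0) in C. *)
Definition reversible (F : fieldType) (theta : F -> F) (n : nat)
  (C : 'rV[F]_n -> Prop) : Prop :=
  forall c, C c -> C (\row_(i < n) theta (c 0 (rev_ord i))).

Definition palindromic (F : fieldType) (f : {poly F}) : Prop :=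
  forall i : nat, (i <= (size f).-1)%N -> f`_i = f`_((size f).-1 - i).

Arguments skew_code {F} theta n g c.
Arguments reversible {F} theta n C.

(* As theta is an involution and n is odd, the skew product x^n g is the ordinary
   product x^n theta(g), while skew right multiplication by x^n - 1, whose
   coefficients are theta-fixed, is ordinary multiplication; hence
   (x^n - theta(g) h) g = theta(g) in F[x; theta], and
   comparing degrees gives theta(g) = c g.  So theta^i(g) = lam_i g with
   lam_i <> 0, and the skew product (sum f_i x^i) g is the ordinary product
   (sum f_i lam_i x^i) g: the code consists of the words w with g | w(x) in F[x].
   The DNA reversal of w is theta applied to the length-n reciprocal of w(x), and
   theta preserves divisibility by g.  Reciprocals are multiplicative, so the code
   is reversible iff g divides its own reciprocal, i.e. reciprocal(g) = nu g.
   Reversing twice gives nu^2 = 1, so nu = 1 in characteristic 2. *)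

From HB Require Import structures.
From mathcomp Require Import all_boot all_order all_algebra all_field.
From mathcomp Require Import zify.
Set Implicit Arguments. Unset Strict Implicit. Unset Printing Implicit Defensive.
Import GRing.Theory.
Local Open Scope ring_scope.

Section SkewMultiplication.
Variables (F : fieldType) (th : {rmorphism F -> F}).

Lemma iter_is_zmod_morphism i : zmod_morphism (iter i th).
Proof. by elim: i => // i IH x y /=; rewrite IH rmorphB. Qed.

Lemma iter_is_monoid_morphism i : monoid_morphism (iter i th).
Proof.
by elim: i => // i [IH1 IHM]; split=> [|x y] /=; rewrite ?IH1 ?IHM ?rmorph1 ?rmorphM.
Qed.

HB.instance Definition _ i :=
  GRing.isZmodMorphism.Build F F (iter i th) (iter_is_zmod_morphism i).
HB.instance Definition _ i :=
  GRing.isMonoidMorphism.Build F F (iter i th) (iter_is_monoid_morphism i).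

Local Notation "f ** g" := (skew_mul th f g) (at level 40, left associativity).
Local Notation twist i p := (map_poly (iter i th) p).
Implicit Types f g k p : {poly F}.

Lemma skew_mulE f g : f ** g = \sum_(i < size f) f`_i *: ('X^i * twist i g).
Proof.
apply: eq_bigr => i _; rewrite /map_poly poly_def mulr_sumr scaler_sumr.
by apply: eq_bigr => j _; rewrite -scalerAr scalerA exprD.
Qed.

Lemma skew_mulE_wide N f g : (size f <= N)%N ->
  f ** g = \sum_(i < N) f`_i *: ('X^i * twist i g).
Proof.
move=> le_fN; rewrite skew_mulE.
rewrite (big_ord_widen N (fun i => f`_i *: ('X^i * twist i g))) //.
rewrite big_mkcond; apply: eq_bigr => i _; case: ltnP => // le_fi.
by rewrite nth_default ?scale0r.
Qed.

Lemma skew_mulDl f1 f2 g : (f1 + f2) ** g = f1 ** g + f2 ** g.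
Proof.
pose N := maxn (size f1) (size f2).
rewrite !(@skew_mulE_wide N) ?leq_maxl ?leq_maxr ?(leq_trans (size_polyD _ _)) //.
by rewrite -big_split; apply: eq_bigr => i _; rewrite coefD scalerDl.
Qed.

Lemma skew_mulZl a f g : (a *: f) ** g = a *: (f ** g).
Proof.
rewrite (@skew_mulE_wide (size f)) ?size_scale_leq // skew_mulE scaler_sumr.
by apply: eq_bigr => i _; rewrite coefZ scalerA.
Qed.

Lemma skew_mul0l g : 0 ** g = 0.
Proof. by rewrite skew_mulE size_poly0 big_ord0. Qed.

Lemma skew_mul0r f : f ** 0 = 0.
Proof. by rewrite skew_mulE big1 // => i _; rewrite rmorph0 mulr0 scaler0. Qed.

Lemma skew_mulBl f1 f2 g : (f1 - f2) ** g = f1 ** g - f2 ** g.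
Proof. by rewrite skew_mulDl -scaleN1r skew_mulZl scaleN1r. Qed.

Lemma skew_mul_suml I (r : seq I) (P : pred I) (G : I -> {poly F}) g :
  (\sum_(i <- r | P i) G i) ** g = \sum_(i <- r | P i) (G i ** g).
Proof.
by apply: (big_morph (skew_mul th ^~ g)) => [f1 f2|]; rewrite ?skew_mulDl ?skew_mul0l.
Qed.

Lemma skew_mulXnl i g : 'X^i ** g = 'X^i * twist i g.
Proof.
rewrite skew_mulE size_polyXn big_ord_recr /= coefXn eqxx scale1r big1 ?add0r //.
by move=> j _; rewrite coefXn (ltn_eqF (ltn_ord j)) scale0r.
Qed.

Lemma skew_mulCl c g : c%:P ** g = c *: g.
Proof.
by rewrite -alg_polyC skew_mulZl -(expr0 'X) skew_mulXnl expr0 mul1r map_poly_id.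
Qed.

Lemma twist_twist i j k : twist i (twist j k) = twist (i + j) k.
Proof. by apply/polyP => m; rewrite !coef_map [RHS]iterD. Qed.

Lemma skew_mulXnMl i p k : ('X^i * p) ** k = 'X^i * (p ** twist i k).
Proof.
rewrite -{1}[p]coefK poly_def mulr_sumr skew_mul_suml skew_mulE mulr_sumr.
apply: eq_bigr => j _.
by rewrite -scalerAr -exprD skew_mulZl skew_mulXnl twist_twist -scalerAr mulrA -exprD addnC.
Qed.

Lemma twist_skew_mul i g k : twist i (g ** k) = twist i g ** twist i k.
Proof.
rewrite skew_mulE rmorph_sum skew_mulE size_map_poly; apply: eq_bigr => j _.
by rewrite /= map_polyZ rmorphM /= map_polyXn !twist_twist coef_map addnC.
Qed.

Lemma skew_mulA f g k : f ** (g ** k) = (f ** g) ** k.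
Proof.
rewrite [f ** g]skew_mulE skew_mul_suml skew_mulE; apply: eq_bigr => i _.
by rewrite skew_mulZl skew_mulXnMl twist_skew_mul.
Qed.

Lemma size_skew_mul f g : f != 0 -> g != 0 -> size (f ** g) = (size f + size g).-1.
Proof.
move=> nz_f nz_g; set d := (size f).-1.
have size_term i : (size (f`_i *: ('X^i * twist i g)) <= i + size g)%N.
  apply: leq_trans (size_scale_leq _ _) _.
  by apply: leq_trans (size_polyMleq _ _) _; rewrite size_polyXn size_map_poly.
have size_lead : size (f`_d *: ('X^d * twist d g)) = (d + size g)%N.
  have lead_f : f`_d != 0 by rewrite -lead_coefE lead_coef_eq0.
  by rewrite size_scale // mulrC size_mulXn ?map_poly_eq0 // size_map_poly.
rewrite skew_mulE [in LHS](polySpred nz_f) big_ord_recr /= addrC size_polyDl size_lead.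
  by rewrite [in RHS](polySpred nz_f).
apply: leq_ltn_trans (size_sum _ _ _) _.
rewrite [in X in (_ < X)%N](polySpred nz_g) addnS ltnS.
apply/bigmax_leqP => i _; apply: leq_trans (size_term i) _.
by rewrite [in X in (X <= _)%N](polySpred nz_g) addnS ltn_add2r.
Qed.

Lemma skew_mul_scaled N (lam : nat -> F) f g :
  (size f <= N)%N -> (forall i, twist i g = lam i *: g) ->
  f ** g = \poly_(i < N) (f`_i * lam i) * g.
Proof.
move=> le_fN lam_g; rewrite (skew_mulE_wide _ le_fN) poly_def mulr_suml.
by apply: eq_bigr => i _; rewrite lam_g -scalerAr scalerA scalerAl.
Qed.

End SkewMultiplication.

Section Reciprocal.
Variable R : comNzRingType.
Implicit Types p q : {poly R}.

Definition reciprocal n p : {poly R} := \poly_(i < n) p`_(n - i.+1).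

Lemma coef_reciprocal n p i :
  (reciprocal n p)`_i = if (i < n)%N then p`_(n - i.+1) else 0.
Proof. exact: coef_poly. Qed.

Lemma reciprocal_is_linear n : linear (reciprocal n).
Proof.
move=> a p q; apply/polyP => i; rewrite coefD coefZ !coef_reciprocal coefD coefZ.
by case: ifP; rewrite ?mulr0 ?addr0.
Qed.

HB.instance Definition _ n := GRing.isLinear.Build R {poly R} {poly R} _ (reciprocal n)
  (reciprocal_is_linear n).

Lemma reciprocalE n p : reciprocal n p = \sum_(i < n) p`_i *: 'X^(n - i.+1).
Proof.
rewrite /reciprocal poly_def (reindex_inj rev_ord_inj) /=.
by apply: eq_bigr => i _; rewrite subnSK // subKn // ltnW.
Qed.

Lemma reciprocal_Xn n k : (k < n)%N -> reciprocal n 'X^k = 'X^(n - k.+1).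
Proof.
move=> lt_kn; apply/polyP => i; rewrite coef_reciprocal !coefXn.
case: ltnP => [lt_in|le_ni]; first by congr (_%:R); apply/eqP/eqP; lia.
by rewrite (_ : i == (n - k.+1)%N = false) //; apply/eqP; lia.
Qed.

Lemma reciprocal_mul a b p q : (size p <= a)%N -> (size q <= b)%N ->
  reciprocal (a + b).-1 (p * q) = reciprocal a p * reciprocal b q.
Proof.
have expand (r : {poly R}) m : (size r <= m)%N -> r = \sum_(i < m) r`_i *: 'X^i.
  move=> le_rm; rewrite -poly_def; apply/polyP => i; rewrite coef_poly.
  by case: ltnP => // le_mi; rewrite nth_default ?(leq_trans le_rm).
move=> /expand {1}-> /expand {1}->.
rewrite [reciprocal a _]reciprocalE [reciprocal b _]reciprocalE !mulr_suml linear_sum.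
apply: eq_bigr => i _; rewrite !mulr_sumr linear_sum; apply: eq_bigr => j _.
have := ltn_ord i; have := ltn_ord j; move: (nat_of_ord i) (nat_of_ord j) => {}i {}j lt_ia lt_jb.
rewrite -!scalerAl -!scalerAr !scalerA -!exprD linearZ /= reciprocal_Xn; last by lia.
by congr (_ *: 'X^_); lia.
Qed.

Lemma reciprocal_widen m d p : (size p <= m)%N ->
  reciprocal (m + d) p = reciprocal m p * 'X^d.
Proof.
move=> le_pm; have -> : (m + d = (m + d.+1).-1)%N by rewrite addnS.
by rewrite -[p in LHS]mulr1 reciprocal_mul ?size_poly1 // -(expr0 'X) reciprocal_Xn // subn1.
Qed.

Lemma reciprocal_Xn_sub1 n : reciprocal n.+1 ('X^n - 1) = - ('X^n - 1).
Proof.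
rewrite -[X in reciprocal _ (_ - X)](expr0 'X) linearB /= !reciprocal_Xn //.
by rewrite subnn subn1 opprB.
Qed.

End Reciprocal.

Section PalindromicDivisor.
Variable F : fieldType.
Implicit Types g p : {poly F}.

Lemma palindromicE g : palindromic g <-> reciprocal (size g) g = g.
Proof.
split => [pal_g | rec_g i le_ig].
  apply/polyP => i; rewrite coef_reciprocal; case: ltnP => [lt_ig|le_gi].
    by rewrite pal_g; [congr (g`_ _); lia | lia].
  by rewrite nth_default.
case: (ltnP i (size g)) => [lt_ig|le_gi]; last by congr (g`_ _); lia.
by rewrite -{1}rec_g coef_reciprocal lt_ig; congr (g`_ _); lia.
Qed.

Lemma palindromic_reciprocal_closed n g p : palindromic g ->
  (size p <= n)%N -> g %| p -> g %| reciprocal n p.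
Proof.
move=> /palindromicE rec_g le_pn /dvdpP[q p_eq]; subst p.
have [->|nz_q] := eqVneq q 0; first by rewrite mul0r linear0 dvdp0.
have [->|nz_g] := eqVneq g 0; first by rewrite mulr0 linear0 dvdpp.
have gt0_q : (0 < size q)%N by rewrite size_poly_gt0.
have gt0_g : (0 < size g)%N by rewrite size_poly_gt0.
rewrite size_mul // in le_pn; set a := size q in gt0_q le_pn; set b := size g in gt0_g le_pn.
rewrite (_ : n = ((n - b.-1) + b).-1)%N; last by lia.
by rewrite reciprocal_mul ?rec_g ?dvdp_mull ?dvdpp // -/a; lia.
Qed.

Lemma dvdp_reciprocal_palindromic g : 2 \in [pchar F] -> g`_0 != 0 ->
  g %| reciprocal (size g) g -> palindromic g.
Proof.
move=> char2 nz_g0; set r := reciprocal (size g) g => g_r.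
have gt0_g : (0 < size g)%N by rewrite size_poly_gt0; apply: contraNneq nz_g0 => ->; rewrite coef0.
have r_top : r`_(size g).-1 = g`_0.
  by rewrite coef_reciprocal prednK // leqnn subnn.
have r_bot : r`_0 = lead_coef g by rewrite coef_reciprocal gt0_g subn1.
have nz_r : r != 0 by apply: contraNneq nz_g0 => r0; rewrite -r_top r0 coef0.
have /eqpP[[c1 c2] /andP[nz_c1 nz_c2] /= c_eq] : g %= r.
  by rewrite -dvdp_size_eqp // eqn_leq dvdp_leq // size_poly.
pose nu := c2^-1 * c1.
have r_eq : r = nu *: g by rewrite -scalerA c_eq scalerA mulVf // scale1r.
have nu2 : nu ^+ 2 = 1.
  have := congr1 (fun p => p`_(size g).-1) r_eq; have := congr1 (fun p => p`_0) r_eq.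
  rewrite /= !coefZ r_top r_bot -lead_coefE => lead_eq top_eq.
  by apply: (mulIf nz_g0); rewrite mul1r [in RHS]top_eq lead_eq mulrA.
have nu1 : nu = 1.
  by move/eqP: nu2; rewrite sqrf_eq1 (oppr_pchar2 char2) orbb => /eqP.
by apply/palindromicE; rewrite -/r r_eq nu1 scale1r.
Qed.

Lemma reciprocal_closed_palindromic n g : 2 \in [pchar F] -> (0 < n)%N ->
  g %| 'X^n - 1 -> (forall p, (size p <= n)%N -> g %| p -> g %| reciprocal n p) ->
  palindromic g.
Proof.
move=> char2 gt0_n g_Xn closed.
have size_Xn : size ('X^n - 1 : {poly F}) = n.+1 by rewrite -polyC1 size_XnsubC.
have nz_Xn : 'X^n - 1 != 0 :> {poly F} by rewrite -size_poly_eq0 size_Xn.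
have nz_g0 : g`_0 != 0.
  case/dvdpP: g_Xn => q Xn_eq; apply/eqP => g00; have := congr1 (fun p => p`_0) Xn_eq.
  rewrite /= coef0M g00 mulr0 coefB coefXn coef1 eqxx ltn_eqF // sub0r => /eqP.
  by rewrite oppr_eq0 oner_eq0.
apply: (dvdp_reciprocal_palindromic char2 nz_g0).
have := dvdp_leq nz_Xn g_Xn; rewrite size_Xn leq_eqVlt ltnS => /orP[/eqP size_g|le_gn].
  (* Then only the zero word is a multiple of g, but g is a scalar multiple of
     x^n - 1, whose reciprocal is -(x^n - 1). *)
  have /eqpP[[c1 c2] /andP[nz_c1 nz_c2] /= c_eq] : g %= 'X^n - 1.
    by rewrite -dvdp_size_eqp // size_g size_Xn.
  have g_eq : g = (c1^-1 * c2) *: ('X^n - 1).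
    by rewrite -scalerA -c_eq scalerA mulVf // scale1r.
  by rewrite size_g {2}g_eq linearZ /= reciprocal_Xn_sub1 scalerN -g_eq dvdpNr dvdpp.
have coprime_g_Xn : coprimep g 'X^(n - size g).
  by rewrite coprimep_expr // coprimepX rootE horner_coef0.
rewrite -(Gauss_dvdpl _ coprime_g_Xn) -reciprocal_widen // subnKC //.
exact: closed (dvdpp g).
Qed.

End PalindromicDivisor.

Section Words.
Variables (F : fieldType) (n : nat).
Implicit Type c : 'rV[F]_n.

Lemma coef_word_poly c (i : 'I_n) : (word_poly c)`_i = c 0 i.
Proof.
rewrite coef_sum (bigD1 i) //= coefZ coefXn eqxx mulr1 big1 ?addr0 // => j ne_ji.
by rewrite coefZ coefXn eq_sym val_eqE (negbTE ne_ji) mulr0.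
Qed.

Lemma size_word_poly c : (size (word_poly c) <= n)%N.
Proof.
apply/leq_sizeP => j le_nj; rewrite coef_sum big1 // => i _.
by rewrite coefZ coefXn gtn_eqF ?mulr0 // (leq_trans (ltn_ord i)).
Qed.

Lemma word_poly_row (p : {poly F}) : (size p <= n)%N -> word_poly (\row_(i < n) p`_i) = p.
Proof.
move=> le_pn; apply/polyP => j; case: (ltnP j n) => [lt_jn|le_nj].
  by rewrite (coef_word_poly _ (Ordinal lt_jn)) mxE.
by rewrite !nth_default ?(leq_trans (size_word_poly _)) ?(leq_trans le_pn).
Qed.

Lemma word_poly_rev (th : {rmorphism F -> F}) c :
  word_poly (\row_(i < n) th (c 0 (rev_ord i))) = map_poly th (reciprocal n (word_poly c)).
Proof.
apply/polyP => j; rewrite coef_map /= coef_reciprocal; case: ltnP => [lt_jn|le_nj].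
  by rewrite (coef_word_poly _ (Ordinal lt_jn)) mxE -(coef_word_poly c (rev_ord _)).
by rewrite rmorph0 nth_default // (leq_trans (size_word_poly _)).
Qed.

End Words.

Section SkewCyclicCode.
Variables (F : fieldType) (th : {rmorphism F -> F}).
Hypothesis thK : involutive th.

Local Notation "f ** g" := (skew_mul th f g) (at level 40, left associativity).
Local Notation twist i p := (map_poly (iter i th) p).
Implicit Types f g p q : {poly F}.

Lemma iter_involutive i x : iter i th x = if odd i then th x else x.
Proof. by elim: i => //= i ->; case: (odd i); rewrite ?thK. Qed.

Lemma twist_semi_invariant c q i :
  map_poly th q = c *: q -> twist i q = (if odd i then c else 1) *: q.
Proof.
move=> th_q; apply/polyP => j; rewrite coef_map /= iter_involutive.
by case: (odd i); rewrite ?scale1r // -th_q coef_map.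
Qed.

Lemma skew_mul_fixr p q : map_poly th q = q -> p ** q = p * q.
Proof.
move=> th_q; rewrite (@skew_mul_scaled _ _ (size p) (fun=> 1)) //.
  by under eq_poly do rewrite mulr1; rewrite coefK.
by move=> i; rewrite (@twist_semi_invariant 1) ?if_same // scale1r.
Qed.

Variables (n : nat) (h g : {poly F}).
Hypotheses (n_odd : odd n) (Xn_sub1_skew : 'X^n - 1 = h ** g).

Lemma skew_divisor_semi_invariant : exists2 c, c != 0 & map_poly th g = c *: g.
Proof.
have nz_Xn_sub1 : 'X^n - 1 != 0 :> {poly F}.
  by rewrite -size_poly_eq0 -polyC1 size_XnsubC // odd_gt0.
have nz_g : g != 0.
  by apply: contraNneq nz_Xn_sub1 => g0; rewrite Xn_sub1_skew g0 skew_mul0r.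
set gt := map_poly th g.
have nz_gt : gt != 0 by rewrite map_poly_eq0.
have Xn_g : 'X^n ** g = 'X^n * gt.
  rewrite skew_mulXnl; congr (_ * _).
  by apply/polyP => j; rewrite !coef_map /= iter_involutive n_odd.
have gt_Xn_sub1 : gt ** ('X^n - 1) = gt * ('X^n - 1).
  by rewrite skew_mul_fixr // rmorphB /= map_polyXn rmorph1.
have gt_skew : gt = ('X^n - gt ** h) ** g.
  rewrite skew_mulBl -skew_mulA -Xn_sub1_skew Xn_g gt_Xn_sub1.
  by rewrite mulrBr mulr1 (mulrC gt) opprB addrC subrK.
set u := 'X^n - gt ** h in gt_skew.
have nz_u : u != 0.
  by apply: contraNneq nz_gt => u0; rewrite gt_skew u0 skew_mul0l.
have /size1_polyC u_const : (size u <= 1)%N.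
  have := size_map_poly th g; rewrite -/gt {1}gt_skew size_skew_mul //.
  rewrite [in RHS](polySpred nz_g) -add1n [in LHS](polySpred nz_g) addnS /=.
  by move=> /eqP; rewrite eqn_add2r => /eqP ->.
have gt_eq : gt = u`_0 *: g by rewrite {1}gt_skew {1}u_const skew_mulCl.
exists u`_0 => //.
by apply: contraNneq nz_gt => u00; rewrite gt_eq u00 scale0r eqxx.
Qed.

Lemma skew_multiple_dvdp p : (exists f, p = f ** g) <-> g %| p.
Proof.
have [c nz_c th_g] := skew_divisor_semi_invariant.
pose lam i := if odd i then c else 1.
have lam_g i : twist i g = lam i *: g := twist_semi_invariant i th_g.
have nz_lam i : lam i != 0 by rewrite /lam; case: odd; rewrite ?oner_neq0.
split => [[f ->]|/dvdpP[q ->]].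
  by rewrite (skew_mul_scaled (leqnn _) lam_g) dvdp_mull ?dvdpp.
exists (\poly_(i < size q) (q`_i / lam i)).
rewrite (skew_mul_scaled (size_poly _ _) lam_g); congr (_ * _).
by rewrite -[LHS]coefK; apply: eq_poly => i lt_iq; rewrite coef_poly lt_iq mulfVK.
Qed.

Lemma skew_code_dvdp (c : 'rV[F]_n) : skew_code th n g c <-> g %| word_poly c.
Proof.
rewrite -skew_multiple_dvdp; split => [[f [q ->]]|[f c_eq]].
  by exists (f + q ** h); rewrite Xn_sub1_skew skew_mulA skew_mulDl.
by exists f, 0; rewrite skew_mul0l addr0.
Qed.

Lemma reversible_skew_code_palindromic : 2 \in [pchar F] ->
  reversible th n (skew_code th n g) <-> palindromic g.
Proof.
move=> char2; have [c nz_c th_g] := skew_divisor_semi_invariant.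
have dvdp_th p : (g %| map_poly th p) = (g %| p).
  by rewrite -(dvdpZl _ _ nz_c) -th_g dvdp_map.
have g_Xn : g %| 'X^n - 1 by apply/skew_multiple_dvdp; exists h.
split => [rev_C | pal_g].
  apply: (reciprocal_closed_palindromic char2 (odd_gt0 n_odd) g_Xn) => p le_pn g_p.
  have /rev_C : skew_code th n g (\row_(i < n) p`_i).
    by apply/skew_code_dvdp; rewrite word_poly_row.
  by move/skew_code_dvdp; rewrite word_poly_rev word_poly_row // dvdp_th.
move=> w /skew_code_dvdp g_w; apply/skew_code_dvdp.
by rewrite word_poly_rev dvdp_th palindromic_reciprocal_closed ?size_word_poly.
Qed.

End SkewCyclicCode.

Section Frobenius.
Variables (F : finFieldType) (s : nat).

Lemma frob_is_monoid_morphism : monoid_morphism (@frob F s).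
Proof. by split=> [|x y]; rewrite /frob ?expr1n ?exprMn. Qed.

Lemma frob_involutive : #|F| = (4 ^ (2 * s))%N -> involutive (@frob F s).
Proof. by move=> card_F x; rewrite /frob -exprM -expnD addnn -mul2n -card_F expf_card. Qed.

Hypothesis char2 : 2 \in [pchar F].

Lemma frob_is_zmod_morphism : zmod_morphism (@frob F s).
Proof.
have char_frob : [pchar F].-nat (4 ^ s)%N.
  by rewrite (eq_pnat _ (pcharf_eq char2)) -[4%N]/(2 ^ 2)%N -expnM pnatX pnat_id.
by move=> x y; rewrite /frob exprDn_pchar ?exprNn_pchar.
Qed.

Definition frob_rmorphism : {rmorphism F -> F} :=
  HB.pack (@frob F s) (GRing.isZmodMorphism.Build _ _ _ frob_is_zmod_morphism)
    (GRing.isMonoidMorphism.Build _ _ _ frob_is_monoid_morphism).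

End Frobenius.

Theorem theorem6 (F : finFieldType) (s n : nat) (h g : {poly F}) :
  (1 <= s)%N -> #|F| = (4 ^ (2 * s))%N -> odd n ->
  'X^n - 1 = skew_mul (frob s) h g ->
  (reversible (frob s) n (skew_code (frob s) n g) <-> palindromic g).
Proof.
move=> _ card_F n_odd Xn_sub1.
have char2 : 2 \in [pchar F].
  by apply: (@card_finPcharP _ 2 (2 * (2 * s))); rewrite // card_F [RHS]expnM.
exact: (@reversible_skew_code_palindromic F (frob_rmorphism s char2)
  (frob_involutive card_F) n h g n_odd Xn_sub1 char2).
Qed.
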